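(* Consider the discrete-time system $x_{k+1}=(I-\varepsilon\Delta)x_k+\varepsilon\pi A\psi(x_k)$, with $\pi>0$, each $\psi_i$ satisfying (A1)–(A4), and step size $0<\varepsilon<\frac{2}{\max_i\delta_i}$. Suppose the system admits a period-2 orbit: there is $K\ge0$ such that $x_{K+1}\neq x_K$ and $x_{k+2}=x_k$ for all $k\ge K$. Then $\pi>\pi_{1,d}$.
   Context: Let $\mathcal G$ be an undirected, connected signed graph on $n$ nodes without self-loops, with symmetric adjacency matrix $A=[a_{ij}]$ having zero diagonal and entries of either sign. Let $\delta_i=\sum_j|a_{ij}|>0$ and $\Delta=\mathrm{diag}(\delta_i)$. For $\pi>0$ let $L_\pi=\Delta-\pi A$. Define $\pi_{1,d}$ as the smallest $\pi>0$ at which the largest eigenvalue satisfies $\lambda_n(L_\pi)=2/\varepsilon$, equivalently the smallest eigenvalue of $J_\pi=I-\varepsilon L_\pi$ equals $-1$. Each $\psi_i:\mathbb R\to\mathbb R$ is smooth and satisfies: (A1) $\psi_i$ is odd; (A2) $\psi_i'>0$ everywhere and $\psi_i'(0)=1$; (A3) $\lim_{s\to\pm\infty}\psi_i(s)=\pm1$; (A4) $\psi_i$ is strictly convex for $s<0$ and strictly concave for $s>0$. Here $\psi(x)=(\psi_i(x_i))_i$. *)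

From HB Require Import structures.
From mathcomp Require Import all_boot all_order all_algebra.
From mathcomp Require Import all_classical all_reals all_analysis.
Set Implicit Arguments. Unset Strict Implicit. Unset Printing Implicit Defensive.
Import Order.TTheory GRing.Theory Num.Theory.
Import numFieldNormedType.Exports.
Local Open Scope classical_set_scope.
Local Open Scope ring_scope.

Section Defs.
Variable R : realType.

Definition delta (n : nat) (A : 'M[R]_n) (i : 'I_n) : R := \sum_(j < n) `|A i j|.

Definition Delta (n : nat) (A : 'M[R]_n) : 'M[R]_n := diag_mx (\row_i delta A i).

Definition Lpi (n : nat) (A : 'M[R]_n) (p : R) : 'M[R]_n := Delta A - p *: A.

Definition is_largest_eigenvalue (n : nat) (M : 'M[R]_n) (lam : R) : Prop :=
  eigenvalue M lam /\ forall mu, eigenvalue M mu -> mu <= lam.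

Definition is_pi1d (n : nat) (A : 'M[R]_n) (eps p : R) : Prop :=
  0 < p /\ is_largest_eigenvalue (Lpi A p) (2 / eps) /\
  forall q, 0 < q -> is_largest_eigenvalue (Lpi A q) (2 / eps) -> p <= q.

Definition signed_graph_ok (n : nat) (A : 'M[R]_n) : Prop :=
  A^T = A /\ (forall i, A i i = 0) /\
  (forall i j : 'I_n, connect (fun k l => A k l != 0) i j) /\
  (forall i, 0 < delta A i).

Definition smooth (f : R -> R) : Prop :=
  forall (k : nat) (x : R), derivable (iter k (fun g : R -> R => derive1 g) f) x 1.

(* assumptions (A1)-(A4) on psi_i *)
Definition admissible (f : R -> R) : Prop :=
  smooth f /\
  (forall s, f (- s) = - f s) /\
  (forall s, 0 < derive1 f s) /\ derive1 f 0 = 1 /\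
  (f x @[x --> +oo] --> (1 : R)) /\ (f x @[x --> -oo] --> (-1 : R)) /\
  (forall x y t, x < 0 -> y < 0 -> x != y -> 0 < t < 1 ->
      f (t * x + (1 - t) * y) < t * f x + (1 - t) * f y) /\
  (forall x y t, 0 < x -> 0 < y -> x != y -> 0 < t < 1 ->
      t * f x + (1 - t) * f y < f (t * x + (1 - t) * y)).

Definition psiv (n : nat) (psi : 'I_n -> R -> R) (v : 'cV[R]_n) : 'cV[R]_n :=
  \col_i psi i (v i 0).

Definition is_trajectory (n : nat) (A : 'M[R]_n) (psi : 'I_n -> R -> R)
  (eps p : R) (x : nat -> 'cV[R]_n) : Prop :=
  forall k, x k.+1 = (1%:M - eps *: Delta A) *m x k + (eps * p) *: (A *m psiv psi (x k)).

End Defs.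

(* Let g(q) be the supremum of the Rayleigh quotients u^T L_q u / u^T u.  For
   symmetric L_q it is the largest eigenvalue (g(q) I - L_q is positive
   semidefinite, and if it were invertible it would be coercive, contradicting
   the definition of g(q)).  g is Lipschitz, g(0) <= max_i delta_i < 2/eps,
   and a period-2 orbit a -> b -> a gives w^T L_pi w > (2/eps) w^T w for
   w = psi(a) - psi(b), since each psi_i increases strictly less than its
   argument ((A1), (A2), (A4) and the mean value theorem).  Hence g(pi) > 2/eps
   and the first crossing of the level 2/eps by g on (0, pi) is pi_{1,d}. *)

From HB Require Import structures.
From mathcomp Require Import all_boot all_order all_algebra.
From mathcomp Require Import all_classical all_reals all_analysis.
From mathcomp Require Import ring lra.
Set Implicit Arguments. Unset Strict Implicit. Unset Printing Implicit Defensive.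
Import Order.TTheory GRing.Theory Num.Theory.
Import numFieldNormedType.Exports.
Local Open Scope classical_set_scope.
Local Open Scope ring_scope.

Section QuadraticForms.
Variables (R : realFieldType) (n : nat).
Implicit Types (M B : 'M[R]_n) (u v : 'cV[R]_n).

Definition bform M u v : R := (u^T *m M *m v) 0 0.
Definition qform M u : R := bform M u u.
Definition sqnorm u : R := (u^T *m u) 0 0.

(* The l1 norm of the entries of M: a crude bound for |u^T M u| / u^T u. *)
Definition entry_abs_sum M : R := \sum_i \sum_j `|M i j|.

Lemma qformE M u : qform M u = \sum_i \sum_j u i 0 * M i j * u j 0.
Proof.
rewrite /qform /bform mxE exchange_big /=; apply: eq_bigr => i _.
by rewrite mxE big_distrl /=; apply: eq_bigr => j _; rewrite !mxE.
Qed.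

Lemma qform_rowE M u : qform M u = \sum_i u i 0 * (M *m u) i 0.
Proof.
by rewrite /qform /bform -mulmxA mxE; apply: eq_bigr => i _; rewrite mxE.
Qed.

Lemma sqnormE u : sqnorm u = \sum_i u i 0 ^+ 2.
Proof. by rewrite /sqnorm mxE; apply: eq_bigr => i _; rewrite !mxE expr2. Qed.

Lemma sqnorm_ge0 u : 0 <= sqnorm u.
Proof. by rewrite sqnormE sumr_ge0 // => i _; rewrite sqr_ge0. Qed.

Lemma sqr_le_sqnorm u i : u i 0 ^+ 2 <= sqnorm u.
Proof.
by rewrite sqnormE (bigD1 i) //= lerDl sumr_ge0 // => j _; rewrite sqr_ge0.
Qed.

Lemma sqnorm_gt0 u : u != 0 -> 0 < sqnorm u.
Proof.
move=> u_neq0; have [i ui_neq0] : exists i, u i 0 != 0.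
  apply/existsP; apply: contraR u_neq0 => /existsPn u0; apply/eqP/matrixP.
  by move=> i j; rewrite (ord1 j) mxE; apply/eqP; rewrite -[_ == _]negbK u0.
rewrite sqnormE (bigD1 i) //= ltr_wpDr //.
  by rewrite sumr_ge0 // => j _; rewrite sqr_ge0.
by rewrite lt0r sqrf_eq0 ui_neq0 sqr_ge0.
Qed.

Lemma entry_abs_sum_ge0 M : 0 <= entry_abs_sum M.
Proof. by rewrite sumr_ge0 // => i _; rewrite sumr_ge0. Qed.

Lemma entry_abs_sumZ c M : entry_abs_sum (c *: M) = `|c| * entry_abs_sum M.
Proof.
rewrite /entry_abs_sum mulr_sumr; apply: eq_bigr => i _.
by rewrite mulr_sumr; apply: eq_bigr => j _; rewrite mxE normrM.
Qed.

(* |u^T M u| <= (sum_ij |M_ij|) |u|^2, using |u_i u_j| <= |u|^2. *)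
Lemma qform_bound M u : `|qform M u| <= entry_abs_sum M * sqnorm u.
Proof.
rewrite qformE /entry_abs_sum big_distrl /= (le_trans (ler_norm_sum _ _ _)) //.
apply: ler_sum => i _; rewrite big_distrl /= (le_trans (ler_norm_sum _ _ _)) //.
apply: ler_sum => j _.
have ui := sqr_le_sqnorm u i; have uj := sqr_le_sqnorm u j.
have uij : `|u i 0| * `|u j 0| <= sqnorm u.
  rewrite -(real_normK (num_real (u i 0))) in ui.
  rewrite -(real_normK (num_real (u j 0))) in uj.
  by have := normr_ge0 (u i 0); have := normr_ge0 (u j 0); nra.
by rewrite !normrM; have := normr_ge0 (M i j); nra.
Qed.

Lemma qformD M B u : qform (M + B) u = qform M u + qform B u.
Proof. by rewrite /qform /bform mulmxDr mulmxDl !mxE. Qed.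

Lemma qformB M B u : qform (M - B) u = qform M u - qform B u.
Proof. by rewrite /qform /bform mulmxBr mulmxBl !mxE. Qed.

Lemma qform_scalar c u : qform c%:M u = c * sqnorm u.
Proof. by rewrite /qform /bform /sqnorm mul_mx_scalar -scalemxAl mxE. Qed.

Lemma sqnorm_mul B u : sqnorm (B *m u) = qform (B^T *m B) u.
Proof. by rewrite /sqnorm /qform /bform trmx_mul !mulmxA. Qed.

Lemma qform_combination M u v a :
  qform M (a *: u - v) =
  a ^+ 2 * qform M u - a * (bform M u v + bform M v u) + qform M v.
Proof.
rewrite /qform /bform.
have -> : (a *: u - v)^T = a *: u^T - v^T by rewrite linearB linearZ.
rewrite !(mulmxBl, mulmxBr) -!(scalemxAl, scalemxAr) !mxE.
by rewrite expr2; ring.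
Qed.

(* For a symmetric positive semidefinite M, |M u|^2 is controlled by the
   quadratic form: expand 0 <= (c u - M u)^T M (c u - M u) with c large. *)
Lemma psd_sqnorm_mul_le M u : M^T = M -> (forall v, 0 <= qform M v) ->
  sqnorm (M *m u) <= (entry_abs_sum M + 1) * qform M u.
Proof.
move=> MT M_psd; set c := entry_abs_sum M + 1; set y := M *m u.
have c_gt0 : 0 < c by rewrite ltr_wpDl ?entry_abs_sum_ge0.
have bf_y : bform M u y = sqnorm y /\ bform M y u = sqnorm y.
  by rewrite /bform /sqnorm /y trmx_mul MT !mulmxA.
have qf_y : qform M y <= c * sqnorm y.
  apply: le_trans (ler_norm _) _; apply: le_trans (qform_bound M y) _.
  by rewrite ler_wpM2r ?sqnorm_ge0 // lerDl.
have := M_psd (c *: u - y); rewrite qform_combination; case: bf_y => -> ->.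
have := sqnorm_ge0 y; nra.
Qed.

Lemma psd_unit_coercive M : M^T = M -> (forall v, 0 <= qform M v) ->
  M \in unitmx -> exists2 k, 0 < k & forall u, k * sqnorm u <= qform M u.
Proof.
move=> MT M_psd M_unit; set N := invmx M.
set c1 := entry_abs_sum M + 1; set c2 := entry_abs_sum (N^T *m N) + 1.
have c1_gt0 : 0 < c1 by rewrite ltr_wpDl ?entry_abs_sum_ge0.
have c2_gt0 : 0 < c2 by rewrite ltr_wpDl ?entry_abs_sum_ge0.
have inv_bound u : sqnorm u <= c2 * sqnorm (M *m u).
  rewrite -{1}(mulKmx M_unit u) -/N [sqnorm (N *m _)]sqnorm_mul.
  apply: le_trans (ler_norm _) _; apply: le_trans (qform_bound _ _) _.
  by rewrite ler_wpM2r ?sqnorm_ge0 // lerDl.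
exists (c1 * c2)^-1 => [|u]; first by rewrite invr_gt0 mulr_gt0.
rewrite mulrC ler_pdivrMr ?mulr_gt0 //.
have := inv_bound u; have := psd_sqnorm_mul_le u MT M_psd; rewrite -/c1.
have := sqnorm_ge0 (M *m u); nra.
Qed.

End QuadraticForms.

Section RayleighSupremum.
Variables (R : realType) (n : nat).
Hypothesis n_gt0 : (0 < n)%N.
Implicit Types (M N : 'M[R]_n) (u : 'cV[R]_n).

(* The Rayleigh quotients of M and their supremum, which for symmetric M is
   the largest eigenvalue. *)
Definition rayleigh_quotients M : set R :=
  [set r | exists2 u, u != 0 & r = qform M u / sqnorm u].
Definition rayleigh_sup M : R := sup (rayleigh_quotients M).

Lemma rayleigh_quotients_neq0 M : rayleigh_quotients M !=set0.
Proof.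
have one_neq0 : (const_mx 1 : 'cV[R]_n) != 0.
  apply/eqP => /matrixP/(_ (Ordinal n_gt0) 0); rewrite !mxE => /eqP.
  by rewrite oner_eq0.
by eexists; exists (const_mx 1).
Qed.

Lemma rayleigh_quotients_has_sup M : has_sup (rayleigh_quotients M).
Proof.
split; first exact: rayleigh_quotients_neq0.
exists (entry_abs_sum M) => _ [u u_neq0 ->].
rewrite ler_pdivrMr ?sqnorm_gt0 //.
exact: le_trans (ler_norm _) (qform_bound M u).
Qed.

Lemma qform_le_rayleigh_sup M u : qform M u <= rayleigh_sup M * sqnorm u.
Proof.
have [->|u_neq0] := eqVneq u 0.
  by rewrite /qform /bform /sqnorm !mulmx0 mxE mulr0.
rewrite -ler_pdivrMr ?sqnorm_gt0 //.
by apply: sup_upper_bound; [exact: rayleigh_quotients_has_sup | exists u].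
Qed.

Lemma rayleigh_sup_le M c : (forall u, qform M u <= c * sqnorm u) ->
  rayleigh_sup M <= c.
Proof.
move=> M_le; apply: ge_sup; first exact: rayleigh_quotients_neq0.
by move=> _ [u u_neq0 ->]; rewrite ler_pdivrMr ?sqnorm_gt0.
Qed.

Lemma rayleigh_sup_gt M c u : c * sqnorm u < qform M u -> c < rayleigh_sup M.
Proof.
move=> qform_gt; rewrite ltNge; apply/negP => sup_le.
have := qform_le_rayleigh_sup M u; have := ler_wpM2r (sqnorm_ge0 u) sup_le.
lra.
Qed.

Lemma rayleigh_supD M N :
  rayleigh_sup (M + N) <= rayleigh_sup M + entry_abs_sum N.
Proof.
apply: rayleigh_sup_le => u; rewrite qformD mulrDl.
have := qform_le_rayleigh_sup M u; have := qform_bound N u.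
have := ler_norm (qform N u); lra.
Qed.

Lemma eigenvalue_le_rayleigh_sup M mu : eigenvalue M mu -> mu <= rayleigh_sup M.
Proof.
move=> /eigenvalueP [v vM v_neq0].
have v_sqnorm_gt0 : 0 < sqnorm v^T by rewrite sqnorm_gt0 ?trmx_eq0.
have qform_v : qform M v^T = mu * sqnorm v^T.
  by rewrite /qform /bform /sqnorm trmxK vM -scalemxAl [LHS]mxE.
by have := qform_le_rayleigh_sup M v^T; rewrite qform_v ler_pM2r.
Qed.

(* For symmetric M the Rayleigh supremum g is an eigenvalue: g - M is
   positive semidefinite, so if it were invertible it would be coercive,
   and g could be lowered. *)
Lemma rayleigh_sup_eigenvalue M : M^T = M -> eigenvalue M (rayleigh_sup M).
Proof.
move=> MT; set g := rayleigh_sup M; set S := g%:M - M.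
have ST : S^T = S by rewrite /S linearB /= tr_scalar_mx MT.
have S_psd v : 0 <= qform S v.
  by rewrite /S qformB qform_scalar subr_ge0 qform_le_rayleigh_sup.
have [S_unit|] := boolP (S \in unitmx).
  have [k k_gt0 S_coer] := psd_unit_coercive ST S_psd S_unit.
  suff : g <= g - k by lra.
  apply: rayleigh_sup_le => u; have := S_coer u.
  by rewrite /S qformB qform_scalar; lra.
rewrite unitmxE unitfE negbK => /det0P [v v_neq0 vS].
apply/eigenvalueP; exists v => //.
by move: vS; rewrite /S mulmxBr mul_mx_scalar => /eqP; rewrite subr_eq0 => /eqP.
Qed.

Lemma rayleigh_sup_largest M :
  M^T = M -> is_largest_eigenvalue M (rayleigh_sup M).
Proof.
move=> MT; split; first exact: rayleigh_sup_eigenvalue.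
exact: eigenvalue_le_rayleigh_sup.
Qed.

End RayleighSupremum.

Section FirstCrossing.
Variable R : realType.

Lemma lipschitz_continuous (g : R -> R) C :
  (forall a b, `|g a - g b| <= C * `|a - b|) -> continuous g.
Proof.
move=> g_lip x; apply/cvgrPdist_lt => e e_gt0.
have C1_gt0 : 0 < `|C| + 1 by rewrite ltr_wpDl.
apply/nbhs_ballP; exists (e / (`|C| + 1)) => [|y]; first by rewrite /= divr_gt0.
rewrite /ball_ /= ltr_pdivlMr // => xy.
apply: le_lt_trans (g_lip x y) _; have := ler_norm C.
have := normr_ge0 (x - y); nra.
Qed.

(* First crossing of a level: if a continuous g starts below th at 0 and is
   above th at p > 0, there is a smallest q > 0 with th <= g q, and there
   g equals th (by closedness of the sublevel set and the intermediate value
   theorem). *)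
Lemma first_crossing (g : R -> R) th p : continuous g ->
  g 0 < th -> th < g p -> 0 < p ->
  exists p1, [/\ 0 < p1, p1 < p, g p1 = th &
                 forall q, 0 < q -> th <= g q -> p1 <= q].
Proof.
move=> g_cont g0_lt gp_gt p_gt0.
pose S := [set q : R | 0 <= q] `&` g @^-1` [set r | th <= r].
have S_closed : closed S.
  apply: closedI; first exact: closed_ge.
  by apply: preimage_closed; [move=> x _; exact: g_cont | exact: closed_ge].
have S_p : S p by split; [exact: ltW | exact: ltW].
have S_lb : lbound S 0 by move=> q [].
set p1 := inf S.
have [p1_ge0 gp1_ge] : S p1.
  apply: (itv_closed_infimums _ S_closed); first by exists p.
  split; first by apply: ge_inf; exists 0.
  by move=> q q_lb; apply: lb_le_inf; [exists p | ].
have p1_min q : S q -> p1 <= q by move=> Sq; apply: ge_inf => //; exists 0.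
have gp1_eq : g p1 = th.
  apply/eqP; rewrite eq_le gp1_ge andbT leNgt; apply/negP => th_lt.
  have [c] : exists2 c, c \in `[0, p1] & g c = th.
    apply: IVT => //; first exact: continuous_subspaceT.
    by rewrite ge_min le_max (ltW g0_lt) (ltW th_lt) orbT.
  rewrite in_itv /= => /andP [c_ge0 c_le] gc.
  have c_eq : c = p1.
    by apply/eqP; rewrite eq_le c_le p1_min //; split => //=; rewrite gc.
  by move: th_lt; rewrite -c_eq gc ltxx.
exists p1; split => //.
- rewrite lt_neqAle p1_ge0 andbT; apply/eqP => p1_eq0.
  by move: g0_lt; rewrite p1_eq0 gp1_eq ltxx.
- rewrite lt_neqAle (p1_min p S_p) andbT; apply/eqP => p1_eq.
  by move: gp_gt; rewrite -p1_eq gp1_eq ltxx.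
- by move=> q q_gt0 gq; apply: p1_min; split => //; exact: ltW.
Qed.

End FirstCrossing.

Section ConcaveSlopes.
Variable R : realType.
Implicit Types (f : R -> R) (a b c s x y z : R).

Definition slope f a b : R := (f b - f a) / (b - a).

Lemma derivable_sub_linear f s z :
  derivable f z 1 -> derivable (f - s \*: (@id R)) z 1.
Proof.
by move=> f_der; apply: derivableB => //; exact/derivableZ/derivable_id.
Qed.

Lemma derive1_sub_linear f s z :
  derivable f z 1 -> derive1 (f - s \*: (@id R)) z = derive1 f z - s.
Proof.
move=> f_der; have id_der : derivable (s \*: (@id R)) z 1.
  exact/derivableZ/derivable_id.
by rewrite !derive1E deriveB // deriveZ ?derive_id // /GRing.scale /= mulr1.
Qed.

(* Derivative bounds from chord-slope bounds: x |-> f x - s x is monotone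
   when the slopes of f are bounded by s. *)
Lemma derive_le_of_slope_lt f s a z : (forall x, derivable f x 1) ->
  (forall x y, a < x -> x < y -> slope f x y < s) -> a < z -> derive1 f z <= s.
Proof.
move=> f_der f_slope a_lt_z.
have kE x : (f - s \*: (@id R)) x = f x - s * x by [].
rewrite -subr_le0 -derive1_sub_linear //.
apply: (@decr_derive1_le0_itvy _ _ false a) => [x _|x y|].
- exact: derivable_sub_linear.
- rewrite !in_itv /= !andbT => a_x a_y y_x.
  have := f_slope y x a_y y_x; rewrite /slope ltr_pdivrMr ?subr_gt0 // !kE.
  lra.
- by rewrite in_itv /= andbT.
Qed.

Lemma derive_ge_of_slope_gt f s a b z : (forall x, derivable f x 1) ->
  (forall x y, a < x -> x < y -> y < b -> s < slope f x y) ->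
  a < z -> z < b -> s <= derive1 f z.
Proof.
move=> f_der f_slope a_lt_z z_lt_b.
have kE x : (f - s \*: (@id R)) x = f x - s * x by [].
rewrite -subr_ge0 -derive1_sub_linear //.
apply: (@incr_derive1_ge0_itv _ _ false true a b) => [x _|x y|].
- exact: derivable_sub_linear.
- rewrite !in_itv /= => /andP [a_x x_b] /andP [a_y y_b] x_y.
  have := f_slope x y a_x x_y y_b; rewrite /slope ltr_pdivlMr ?subr_gt0 // !kE.
  lra.
- by rewrite in_itv /= a_lt_z z_lt_b.
Qed.

Variable f : R -> R.
Hypothesis f_derivable : forall x, derivable f x 1.
Hypothesis f_concave : forall x y t, 0 < x -> 0 < y -> x != y -> 0 < t < 1 ->
  t * f x + (1 - t) * f y < f (t * x + (1 - t) * y).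

Lemma slope_decreasing a b c : 0 < a -> a < b -> b < c ->
  slope f b c < slope f a b.
Proof.
move=> a_gt0 a_b b_c; set t := (c - b) / (c - a).
have ca_gt0 : 0 < c - a by lra.
have t_gt0 : 0 < t by rewrite divr_gt0 //; lra.
have t_lt1 : t < 1 by rewrite ltr_pdivrMr //; lra.
have b_eq : t * a + (1 - t) * c = b by rewrite /t; field; lra.
have t_in : 0 < t < 1 by rewrite t_gt0 t_lt1.
have c_gt0 : 0 < c by lra.
have := f_concave a_gt0 c_gt0 (negbT (lt_eqF (lt_trans a_b b_c))) t_in.
rewrite b_eq => conc.
have combination_eq : (t * f a + (1 - t) * f c) * (c - a) =
    (c - b) * f a + (b - a) * f c by rewrite /t; field; lra.
have : (c - b) * f a + (b - a) * f c < f b * (c - a).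
  by rewrite -combination_eq ltr_pM2r.
rewrite /slope ltr_pdivrMr ?subr_gt0 // mulrAC ltr_pdivlMr ?subr_gt0 //.
nra.
Qed.

Lemma derive_le_slope a b z :
  0 < a -> a < b -> b < z -> derive1 f z <= slope f a b.
Proof.
move=> a_gt0 a_b b_z; apply: (derive_le_of_slope_lt f_derivable _ b_z).
move=> x y b_x x_y.
have := slope_decreasing a_gt0 a_b b_x.
have := slope_decreasing (lt_trans a_gt0 a_b) b_x x_y; lra.
Qed.

Lemma slope_le_derive a b z :
  0 < z -> z < a -> a < b -> slope f a b <= derive1 f z.
Proof.
move=> z_gt0 z_a a_b; apply: (derive_ge_of_slope_gt f_derivable _ z_gt0 z_a).
move=> x y x_gt0 x_y y_a.
have := slope_decreasing (lt_trans x_gt0 x_y) y_a a_b.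
have := slope_decreasing x_gt0 x_y y_a; lra.
Qed.

Lemma derive_lt_derive0 c :
  derivable (derive1 f) 0 1 -> 0 < c -> derive1 f c < derive1 f 0.
Proof.
move=> f'_der c_gt0.
have f'_cont : {for 0, continuous (derive1 f)}.
  by apply: differentiable_continuous; rewrite -derivable1_diffP.
have f'c_le : derive1 f c <= slope f (c / 2) (3 * c / 4).
  by apply: derive_le_slope; lra.
have slopes_lt : slope f (c / 2) (3 * c / 4) < slope f (c / 4) (c / 2).
  by apply: slope_decreasing; lra.
suff : slope f (c / 4) (c / 2) <= derive1 f 0 by lra.
apply: (cvgr_to_ge (cvg_at_right_filter f'_cont)).
near=> x; apply: slope_le_derive; last lra.
- by near: x; exact: nbhs_right_gt.
- by near: x; apply: nbhs_right_lt; lra.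
Unshelve. all: by end_near.
Qed.

End ConcaveSlopes.

Section AdmissibleSlopes.
Variable R : realType.
Implicit Types (f : R -> R) (a b : R).

(* On the nonnegative half-line an admissible f is increasing and
   1-contracting: f' > 0 everywhere and, by strict concavity, f' < f'(0) = 1
   on the positive reals; conclude by the mean value theorem. *)
Lemma admissible_slope_nonneg f a b : admissible f -> 0 <= b -> b < a ->
  0 < f a - f b < a - b.
Proof.
move=> [f_smooth [_ [f'_gt0 [f'0 [_ [_ [_ f_concave]]]]]]] b_ge0 b_a.
have f_der x : derivable f x 1 by exact: (f_smooth 0%N x).
have f'_der : derivable (derive1 f) 0 1 by exact: (f_smooth 1%N 0).
have f_is_derive (x : R) : is_derive x 1 f (derive1 f x).
  by rewrite derive1E; exact: derivableP.
have [c] := @MVT _ f (derive1 f) b a b_a (fun x _ => f_is_derive x)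
  (derivable_within_continuous (fun x _ => f_der x)).
rewrite in_itv /= => /andP [b_c c_a] ->.
have f'c_lt1 := derive_lt_derive0 f_der f_concave f'_der (le_lt_trans b_ge0 b_c).
have := f'_gt0 c; rewrite f'0 in f'c_lt1.
by move=> f'c_gt0; apply/andP; split; nra.
Qed.

(* By oddness the same holds on the whole line. *)
Lemma admissible_slope f a b : admissible f -> b < a -> 0 < f a - f b < a - b.
Proof.
move=> f_adm b_a; have [_ [f_odd _]] := f_adm.
have f0 : f 0 = 0 by have := f_odd 0; rewrite oppr0; lra.
have [b_ge0|b_lt0] := leP 0 b; first exact: admissible_slope_nonneg.
have [a_le0|a_gt0] := leP a 0.
  have na_ge0 : 0 <= - a by lra.
  have nb_gt : - a < - b by lra.
  have := admissible_slope_nonneg f_adm na_ge0 nb_gt.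
  by rewrite !f_odd => /andP [? ?]; apply/andP; split; lra.
have nb_gt0 : 0 < - b by lra.
have := admissible_slope_nonneg f_adm (lexx 0) a_gt0.
have := admissible_slope_nonneg f_adm (lexx 0) nb_gt0.
rewrite f_odd f0 => /andP [? ?] /andP [? ?].
by apply/andP; split; lra.
Qed.

(* The consequence used for period-2 orbits: the increment of f lies
   strictly between 0 and the increment of its argument. *)
Lemma admissible_increment f a b : admissible f -> a != b ->
  0 < (f a - f b) * ((a - b) - (f a - f b)).
Proof.
move=> f_adm; rewrite neq_lt => /orP [a_b|b_a].
  have /andP [inc_gt0 inc_lt] := admissible_slope f_adm a_b.
  have -> : (f a - f b) * ((a - b) - (f a - f b)) =
            (f b - f a) * ((b - a) - (f b - f a)) by ring.
  by rewrite mulr_gt0 // subr_gt0.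
have /andP [inc_gt0 inc_lt] := admissible_slope f_adm b_a.
by rewrite mulr_gt0 // subr_gt0.
Qed.

End AdmissibleSlopes.

Section SignedLaplacian.
Variables (R : realType) (n : nat) (A : 'M[R]_n).
Implicit Types (q : R) (u : 'cV[R]_n).

Lemma Lpi_mulE q u i : (Lpi A q *m u) i 0 = delta A i * u i 0 - q * (A *m u) i 0.
Proof. by rewrite /Lpi /Delta mulmxBl -scalemxAl mul_diag_mx !mxE. Qed.

Lemma Lpi_sym q : A^T = A -> (Lpi A q)^T = Lpi A q.
Proof. by move=> AT; rewrite /Lpi linearB linearZ /= AT /Delta tr_diag_mx. Qed.

Lemma rayleigh_sup_Lpi_lipschitz : (0 < n)%N -> forall a b,
  `|rayleigh_sup (Lpi A a) - rayleigh_sup (Lpi A b)|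
    <= entry_abs_sum A * `|a - b|.
Proof.
move=> n_gt0 a b.
have LpiE c d : Lpi A c = Lpi A d + (d - c) *: A.
  by rewrite /Lpi scalerBl addrA subrK.
have := rayleigh_supD n_gt0 (Lpi A b) ((b - a) *: A); rewrite -LpiE.
have := rayleigh_supD n_gt0 (Lpi A a) ((a - b) *: A); rewrite -LpiE.
rewrite !entry_abs_sumZ distrC; move: (rayleigh_sup _) (rayleigh_sup _) => ga gb.
by rewrite ler_norml; lra.
Qed.

(* L_0 = Delta, whose Rayleigh quotients are averages of the degrees. *)
Lemma rayleigh_sup_Delta d : (0 < n)%N -> (forall i, delta A i <= d) ->
  rayleigh_sup (Lpi A 0) <= d.
Proof.
move=> n_gt0 delta_le; apply: rayleigh_sup_le => // u.
rewrite qform_rowE sqnormE mulr_sumr; apply: ler_sum => i _.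
rewrite Lpi_mulE mul0r subr0 mulrCA -expr2 mulrC.
by rewrite [d * _]mulrC ler_wpM2l ?sqr_ge0.
Qed.

Lemma step_size_bounds eps : (0 < n)%N -> (forall i, 0 < delta A i) ->
  0 < eps -> eps < 2 / \big[Num.max/0]_(i < n) delta A i ->
  rayleigh_sup (Lpi A 0) < 2 / eps /\ forall i, eps * delta A i < 2.
Proof.
move=> n_gt0 delta_gt0 eps_gt0; set dmax := \big[Num.max/0]_(i < n) _.
have delta_le i : delta A i <= dmax by exact: le_bigmax.
have dmax_gt0 : 0 < dmax := lt_le_trans (delta_gt0 (Ordinal n_gt0)) (delta_le _).
rewrite ltr_pdivlMr // mulrC => dmax_eps; split.
  apply: le_lt_trans (rayleigh_sup_Delta n_gt0 delta_le) _.
  by rewrite ltr_pdivlMr.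
by move=> i; have := delta_le i; nra.
Qed.

Lemma step_entry eps p (x v : 'cV[R]_n) i :
  ((1%:M - eps *: Delta A) *m x + (eps * p) *: (A *m v)) i 0 =
  x i 0 - eps * (delta A i * x i 0) + eps * p * (A *m v) i 0.
Proof. by rewrite mulmxBl mul1mx -scalemxAl /Delta mul_diag_mx !mxE. Qed.

(* A genuine period-2 orbit a -> b -> a forces a Rayleigh quotient of L_p
   above 2/eps, attained at w = psi(a) - psi(b): with d = a - b one gets
   p (A w)_i = -(2 - eps delta_i) d_i / eps, so each coordinate contributes
   (2 - eps delta_i)/eps * w_i (d_i - w_i) >= 0, strictly where d_i != 0. *)
Lemma period2_rayleigh (psi : 'I_n -> R -> R) eps p (a b : 'cV[R]_n) :
  (forall i, admissible (psi i)) -> 0 < eps -> (forall i, eps * delta A i < 2) ->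
  a != b ->
  b = (1%:M - eps *: Delta A) *m a + (eps * p) *: (A *m psiv psi a) ->
  a = (1%:M - eps *: Delta A) *m b + (eps * p) *: (A *m psiv psi b) ->
  exists u, 2 / eps * sqnorm u < qform (Lpi A p) u.
Proof.
move=> psi_adm eps_gt0 eps_delta a_neq_b b_step a_step.
set w := psiv psi a - psiv psi b; exists w.
have coord i : eps * (w i 0 * (Lpi A p *m w) i 0) - 2 * w i 0 ^+ 2 =
    (2 - eps * delta A i) * (w i 0 * ((a i 0 - b i 0) - w i 0)).
  have Aw : (A *m w) i 0 = (A *m psiv psi a) i 0 - (A *m psiv psi b) i 0.
    by rewrite /w mulmxBr !mxE.
  have := congr1 (fun m : 'cV_n => m i 0) b_step.
  have := congr1 (fun m : 'cV_n => m i 0) a_step.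
  rewrite !step_entry Lpi_mulE => ai bi.
  have {ai bi} pAw : eps * p * (A *m w) i 0 =
      - ((2 - eps * delta A i) * (a i 0 - b i 0)) by rewrite Aw; lra.
  have -> : eps * (w i 0 * (delta A i * w i 0 - p * (A *m w) i 0)) =
      eps * delta A i * w i 0 ^+ 2 - w i 0 * (eps * p * (A *m w) i 0) by ring.
  by rewrite pAw; ring.
have coord_ge0 i :
    0 <= (2 - eps * delta A i) * (w i 0 * ((a i 0 - b i 0) - w i 0)).
  rewrite mulr_ge0 ?subr_ge0 ?(ltW (eps_delta i)) // !mxE.
  have [->|ai_neq_bi] := eqVneq (a i 0) (b i 0); first by rewrite !subrr mul0r.
  exact/ltW/admissible_increment.
have [i0 ai0_neq_bi0] : exists i, a i 0 != b i 0.
  apply/existsP; apply: contraR a_neq_b => /existsPn a_eq_b; apply/eqP/matrixP.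
  by move=> i j; rewrite (ord1 j); apply/eqP; rewrite -[_ == _]negbK a_eq_b.
have sum_gt0 : 0 < eps * qform (Lpi A p) w - 2 * sqnorm w.
  rewrite qform_rowE sqnormE !mulr_sumr -sumrB (eq_bigr _ (fun i _ => coord i)).
  rewrite (bigD1 i0) //= ltr_pwDl ?sumr_ge0 // mulr_gt0 ?subr_gt0 //.
  by rewrite !mxE admissible_increment.
by rewrite mulrAC ltr_pdivrMr //; lra.
Qed.

End SignedLaplacian.

Theorem lemma4 (R : realType) (n : nat) (A : 'M[R]_n) (psi : 'I_n -> R -> R)
  (p eps : R) (x : nat -> 'cV[R]_n) :
  signed_graph_ok A ->
  (forall i, admissible (psi i)) ->
  0 < p ->
  0 < eps -> eps < 2 / (\big[Num.max/0]_(i < n) delta A i) ->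
  is_trajectory A psi eps p x ->
  (exists K : nat, x K.+1 != x K /\ forall k, (K <= k)%N -> x k.+2 = x k) ->
  exists p1, is_pi1d A eps p1 /\ p1 < p.
Proof.
move=> [AT [_ [_ delta_gt0]]] psi_adm p_gt0 eps_gt0 eps_lt traj [K [xK_neq per]].
have n_gt0 : (0 < n)%N.
  rewrite lt0n; apply: contraNneq xK_neq => n_eq0; apply/eqP/matrixP => i.
  by have := ltn_ord i; rewrite {2}n_eq0.
have [g0_lt eps_delta] := step_size_bounds n_gt0 delta_gt0 eps_gt0 eps_lt.
pose g q := rayleigh_sup (Lpi A q).
have g_cont : continuous g.
  exact: (@lipschitz_continuous _ g _ (rayleigh_sup_Lpi_lipschitz A n_gt0)).
have gp_gt : 2 / eps < g p.
  have xK_neq' : x K != x K.+1 by rewrite eq_sym.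
  have back_step := etrans (esym (per K (leqnn K))) (traj K.+1).
  have [u] :=
    period2_rayleigh psi_adm eps_gt0 eps_delta xK_neq' (traj K) back_step.
  exact: rayleigh_sup_gt.
have [p1 [p1_gt0 p1_lt gp1 p1_min]] := first_crossing g_cont g0_lt gp_gt p_gt0.
exists p1; split => //; split => //.
have largest q : is_largest_eigenvalue (Lpi A q) (g q).
  exact: rayleigh_sup_largest n_gt0 _ (Lpi_sym q AT).
split; first by rewrite -gp1.
move=> q q_gt0 [q_eig _]; apply: p1_min => //.
exact: eigenvalue_le_rayleigh_sup.
Qed.
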